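(* Let $d=1$ and, for probability measures $\mu$ on $\mathbb R$ with $\int|y|\,\mu(dy)<\infty$, let $$a(x,\mu)=x^2\Big(\int_{\mathbb R}|y|\,\mu(dy)\Big)^3,\qquad b(x,\mu)=-2x^3\int_{\mathbb R}|y|\,\mu(dy),\qquad L_\mu u=a(x,\mu)u''+b(x,\mu)u'.$$ (a) With $m=0$, $V(x)=x^2/2$ and $H\equiv0$, all assumptions of Corollary 2.3 hold: conditions (H1.1), (H1.2), (H1.3) and (H2) are satisfied, $|a(0,\mu)|+|b(0,\mu)|\le C_1+C_2\int H\,d\mu$ for any $C_1,C_2>0$, and there exist $C,\Lambda>0$ (e.g. $C=3$, $\Lambda=2$) such that $\int_{\mathbb R}L_\mu V\,d\mu\le C-\Lambda\int_{\mathbb R}V\,d\mu$ for every compactly supported probability measure $\mu$ on $\mathbb R$. (b) There is no function $U\in C^2(\mathbb R)$ with $U\ge0$, $U(x)\to+\infty$ as $|x|\to\infty$, together with positive numbers $C,\Lambda$, such that $L_\mu U(x)\le C-\Lambda U(x)$ for all $x\in\mathbb R$ and all probability measures $\mu$ with $\int U\,d\mu<\infty$ and $\int |y|\,d\mu<\infty$.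
   Context: For a function $V\in C^2(\mathbb R^d)$, $V\ge0$, $V\to\infty$ at infinity: $\mathcal P_R(V)$ is the set of probability measures with $\int V\,d\mu\le R$; $\mathcal P(V)$ those with $V\in L^1(\mu)$; $\mu_n\to\mu$ $V$-weakly in $\mathcal P(V)$ means $\int f\,d\mu_n\to\int f\,d\mu$ for all continuous $f$ with $f/V\to0$ at infinity. With $m=0$ (no nondegenerate variables, $z=x$), the conditions read: (H1.1) vacuous; (H1.2) for every $R>0$ and every bounded interval $K$: $\sup_{x\in K,\mu\in\mathcal P_R(V)}(|a(x,\mu)|+|b(x,\mu)|)<\infty$; (H1.3) for every $R>0$ and every bounded interval $K$ there is a nonnegative continuous monotone $\omega_{K,R}$ on $[0,\infty)$ with $\omega_{K,R}(0)=0$ and $\sup_{\mu\in\mathcal P_R(V)}(|a(x,\mu)-a(x',\mu)|+|b(x,\mu)-b(x',\mu)|)\le\omega_{K,R}(|x-x'|)$ for $x,x'\in K$; (H2) for every $R>0$, if $\mu_n\in\mathcal P_R(V)$ converges $V$-weakly to $\mu\in\mathcal P_R(V)$ then $|a(x,\mu_n)-a(x,\mu)|+|b(x,\mu_n)-b(x,\mu)|\to0$ for every $x$. Corollary 2.3 (for reference) asserts existence of a probability solution of $(a(x,\mu)\mu)''-(b(x,\mu)\mu)'=0$ under (H1), (H2), the bound $|a(0,\mu)|+|b(0,\mu)|\le C_1+C_2\int H\,d\mu$ with continuous $H\ge0$, $H/V\to0$, and $\int L_\mu V\,d\mu\le C-\Lambda\int V\,d\mu$ for all compactly supported probability measures $\mu$.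 *)

From HB Require Import structures.
From mathcomp Require Import all_boot all_order all_algebra.
From mathcomp Require Import all_classical all_reals all_analysis.
Set Implicit Arguments. Unset Strict Implicit. Unset Printing Implicit Defensive.
Import Order.TTheory GRing.Theory Num.Theory.
Import numFieldNormedType.Exports.
Local Open Scope classical_set_scope.
Local Open Scope ring_scope.

Section Defs.
Variable R : realType.

(* first absolute moment  int |y| mu(dy)  (as a real number; finite in all uses) *)
Definition moment1 (mu : probability R R) : R :=
  fine (\int[mu]_y (`|y|)%:E)%E.

Definition acoef (x : R) (mu : probability R R) : R := x ^+ 2 * (moment1 mu) ^+ 3.
Definition bcoef (x : R) (mu : probability R R) : R := - 2 * x ^+ 3 * moment1 mu.

Definition Lop (mu : probability R R) (u : R -> R) (x : R) : R :=
  acoef x mu * derive1n 2 u x + bcoef x mu * derive1 u x.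

Definition C2 (u : R -> R) : Prop :=
  (forall x, derivable u x 1) /\ (forall x, derivable (derive1 u) x 1) /\ continuous (derive1n 2 u).

Definition tends_to_infty (g : R -> R) : Prop :=
  g x @[x --> +oo] --> +oo /\ g x @[x --> -oo] --> +oo.

Definition Vfun (x : R) : R := x ^+ 2 / 2.

Definition inPV (V : R -> R) (mu : probability R R) : Prop :=
  (\int[mu]_x (V x)%:E < +oo)%E.

Definition inPRV (V : R -> R) (Rr : R) (mu : probability R R) : Prop :=
  (\int[mu]_x (V x)%:E <= Rr%:E)%E.

Definition Vweak_cvg (V : R -> R) (mun : nat -> probability R R)
  (mu : probability R R) : Prop :=
  forall f : R -> R, continuous f ->
    f x / V x @[x --> +oo] --> 0 -> f x / V x @[x --> -oo] --> 0 ->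
    (\int[mun n]_x (f x)%:E)%E @[n --> \oo] --> (\int[mu]_x (f x)%:E)%E.

Definition compact_supp (mu : probability R R) : Prop :=
  exists K : set R, compact K /\ mu (~` K) = 0%E.

End Defs.

(* With m_k = int |y|^k dmu, the coefficients depend on mu only through m_1, and
   int L_mu V dmu = m_1^3 m_2 - 2 m_1 m_4 for V(x) = x^2/2.  The moment inequalities
   m_1^2 <= m_2, m_2^2 <= m_4 and m_2 <= c m_1 + m_4 / c^2 (c > 0) show that the
   dissipative term -2 m_1 m_4 dominates, giving int L_mu V dmu <= 3 - m_2.
   Since m_1 is bounded on P_R(V) and continuous for V-weak convergence
   (|y| / V(y) -> 0), conditions (H1) and (H2) follow.  Pointwise, however, the
   operator vanishes at mu = delta_0, so L_mu U <= C - Lam U would force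
   U <= C / Lam, contradicting U -> +oo. *)

From HB Require Import structures.
From mathcomp Require Import all_boot all_order all_algebra.
From mathcomp Require Import all_classical all_reals all_analysis.
From mathcomp Require Import ring lra measurable_realfun.
Import Order.TTheory GRing.Theory Num.Theory.
Import numFieldNormedType.Exports.
Local Open Scope classical_set_scope.
Local Open Scope ring_scope.

Section nonlinear_FPK_example.
Variable R : realType.
Implicit Types (mu : probability R R) (x y : R).

Lemma Vfun_is_derive x : is_derive x 1 (@Vfun R) x.
Proof.
have -> : @Vfun R = 2^-1 *: (@idfun R ^+ 2) by apply/funext => y; rewrite /Vfun /= mulrC.
have dV := is_deriveZ (2^-1 : R) (is_deriveX 2 (@is_derive_id _ R x 1)).
suff {2}-> : x = 2^-1 *: ((2%:R * (@idfun R x) ^+ 2.-1) *: (1 : R)) by [].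
by rewrite -[RHS]/(2^-1 * ((2%:R * x ^+ 1) * 1)) expr1 mulr1 mulrA mulVf ?mul1r.
Qed.

Lemma derive1_Vfun : derive1 (@Vfun R) = id.
Proof. by apply/funext => x; rewrite derive1E (@derive_val _ _ _ _ _ _ _ (Vfun_is_derive x)). Qed.

Lemma derive2_Vfun : derive1n 2 (@Vfun R) = cst 1.
Proof.
apply/funext => x /=; rewrite derive1_Vfun derive1E.
by rewrite (@derive_val _ _ _ _ _ _ _ (@is_derive_id _ _ x 1)).
Qed.

Lemma Vfun_C2 : C2 (@Vfun R).
Proof.
split; first by move=> x; exact: (@ex_derive _ _ _ _ _ _ _ (Vfun_is_derive x)).
split; first by move=> x; rewrite derive1_Vfun; exact: (@ex_derive _ _ _ _ _ _ _ (@is_derive_id _ R x 1)).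
by rewrite derive2_Vfun; exact: cst_continuous.
Qed.

Lemma Vfun_ge0 x : 0 <= Vfun x.
Proof. by rewrite /Vfun mulr_ge0 ?sqr_ge0. Qed.

Lemma Vfun_normE x : Vfun x = `|x| ^+ 2 / 2.
Proof. by rewrite /Vfun real_normK ?num_real. Qed.

Lemma measurable_Vfun : measurable_fun setT (@Vfun R).
Proof. by apply: measurable_funM => //; exact: measurable_funX. Qed.

Lemma Vfun_tends_to_infty : tends_to_infty (@Vfun R).
Proof.
have big A y : `|A| + 2 <= `|y| -> A <= Vfun y.
  rewrite Vfun_normE => hy.
  have y2 : 2 <= `|y| by rewrite (le_trans _ hy) ?lerDr.
  have -> : `|y| ^+ 2 / 2 = `|y| + `|y| * (`|y| - 2) / 2 by field.
  have : 0 <= `|y| * (`|y| - 2) / 2 by rewrite divr_ge0 ?mulr_ge0 ?subr_ge0.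
  have := ler_norm A; lra.
split; apply/cvgryPge => A.
  apply: filterS (nbhs_pinfty_ge (num_real (`|A| + 2))) => y hy.
  by apply: big; rewrite (le_trans hy) ?ler_norm.
apply: filterS (nbhs_ninfty_le (num_real (- (`|A| + 2)))) => y hy.
by apply: big; rewrite -(normrN y) (le_trans _ (ler_norm (- y))) // lerNr.
Qed.

Lemma norm_div_Vfun_lt x e : 0 < e -> 2 / e < `|x| -> `| `|x| / Vfun x | < e.
Proof.
move=> e0; rewrite ltr_pdivrMr // Vfun_normE => hx.
have x0 : 0 < `|x| by rewrite -(pmulr_rgt0 _ e0) mulrC (lt_trans _ hx).
rewrite ger0_norm ?divr_ge0 ?exprn_ge0 // ltr_pdivrMr ?divr_gt0 ?exprn_gt0 //.
have -> : e * (`|x| ^+ 2 / 2) = `|x| + `|x| * (`|x| * e - 2) / 2 by field.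
by rewrite ltrDl divr_gt0 ?mulr_gt0 ?subr_gt0.
Qed.

Lemma norm_div_Vfun_cvgy : (fun x : R => `|x| / Vfun x) @ +oo --> (0 : R).
Proof.
apply/cvgr0Pnorm_lt => e e0.
apply: filterS (nbhs_pinfty_gt (num_real (2 / e))) => x hx.
by apply: norm_div_Vfun_lt; rewrite // (lt_le_trans hx) ?ler_norm.
Qed.

Lemma norm_div_Vfun_cvgNy : (fun x : R => `|x| / Vfun x) @ -oo --> (0 : R).
Proof.
apply/cvgr0Pnorm_lt => e e0.
apply: filterS (nbhs_ninfty_lt (num_real (- (2 / e)))) => x hx.
by apply: norm_div_Vfun_lt; rewrite // -(normrN x) (lt_le_trans _ (ler_norm (- x))) // ltrNr.
Qed.

Lemma integral_norm_le_PRV {mu Rr} : inPRV (@Vfun R) Rr mu ->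
  (\int[mu]_y (`|y|)%:E <= (2^-1 + Rr)%:E)%E.
Proof.
move=> muRr; apply: (@le_trans _ _ (\int[mu]_y (cst (2^-1 : R)%:E y + (Vfun y)%:E))%E).
  apply: ge0_le_integral => //.
  - by apply/measurable_EFinP; exact: normr_measurable.
  - by apply: emeasurable_funD => //; apply/measurable_EFinP; exact: measurable_Vfun.
  move=> y _; rewrite -EFinD lee_fin Vfun_normE -subr_ge0.
  have -> : 2^-1 + `|y| ^+ 2 / 2 - `|y| = (`|y| - 1) ^+ 2 / 2 by field.
  by rewrite divr_ge0 ?sqr_ge0.
rewrite ge0_integralD //; last 3 first.
- by move=> y _; rewrite lee_fin.
- by move=> y _; rewrite lee_fin Vfun_ge0.
- by apply/measurable_EFinP; exact: measurable_Vfun.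
by rewrite integral_cst // [X in (_ * X)%E]probability_setT mule1 EFinD leeD.
Qed.

Lemma moment1_ge0 mu : 0 <= moment1 mu.
Proof. by rewrite /moment1 fine_ge0 // integral_ge0. Qed.

Lemma moment1E {mu Rr} : inPRV (@Vfun R) Rr mu ->
  (\int[mu]_y (`|y|)%:E)%E = (moment1 mu)%:E.
Proof.
move=> muRr; rewrite /moment1 fineK // ge0_fin_numE ?integral_ge0 //.
by rewrite (le_lt_trans (integral_norm_le_PRV muRr)) ?ltry.
Qed.

Lemma moment1_le_PRV {mu Rr} : inPRV (@Vfun R) Rr mu -> moment1 mu <= 2^-1 + Rr.
Proof.
by move=> muRr; have := integral_norm_le_PRV muRr; rewrite (moment1E muRr) lee_fin.
Qed.

Lemma norm_le_itv (k1 k2 x : R) : x \in `[k1, k2] -> `|x| <= `|k1| + `|k2|.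
Proof.
rewrite in_itv /= ler_norml => /andP[h1 h2].
have := ler_norm k1; have := ler_norm (- k1); have := ler_norm k2.
have := ler_norm (- k2); rewrite !normrN => *; apply/andP; split; lra.
Qed.

Lemma coef_bounded Rr (k1 k2 : R) : exists B : R, forall x, x \in `[k1, k2] ->
  forall mu, inPRV (@Vfun R) Rr mu -> `|acoef x mu| + `|bcoef x mu| <= B.
Proof.
pose K := `|k1| + `|k2|; pose M := 2^-1 + Rr.
exists (K ^+ 2 * M ^+ 3 + 2 * (K ^+ 3 * M)) => x /norm_le_itv xK mu muRr.
have m0 := moment1_ge0 mu; have mM := moment1_le_PRV muRr.
have xK' n : `|x| ^+ n <= K ^+ n by rewrite lerXn2r ?nnegrE // (le_trans _ xK).
have mM' n : moment1 mu ^+ n <= M ^+ n by rewrite lerXn2r ?nnegrE // (le_trans m0).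
rewrite /acoef /bcoef (normrM (x ^+ 2)) (normrM (- 2 * x ^+ 3)) (normrM (- 2)).
rewrite !normrX normrN normr_nat (ger0_norm m0) -mulrA.
apply: lerD; last apply: ler_wpM2l => //.
  by apply: ler_pM; rewrite ?exprn_ge0 ?xK' ?mM'.
by apply: ler_pM; rewrite ?exprn_ge0 ?xK'.
Qed.

Lemma coef_Lipschitz Rr (k1 k2 : R) : exists2 L : R, 0 <= L &
  forall x x', x \in `[k1, k2] -> x' \in `[k1, k2] ->
  forall mu, inPRV (@Vfun R) Rr mu ->
  `|acoef x mu - acoef x' mu| + `|bcoef x mu - bcoef x' mu| <= L * `|x - x'|.
Proof.
pose K := `|k1| + `|k2|; pose M := Num.max 0 (2^-1 + Rr).
have K0 : 0 <= K by rewrite addr_ge0.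
have M0 : 0 <= M by rewrite le_max lexx.
exists (2 * K * M ^+ 3 + 6 * K ^+ 2 * M); first by rewrite addr_ge0 ?mulr_ge0 ?exprn_ge0.
move=> x x' /norm_le_itv xK /norm_le_itv x'K mu muRr.
have m0 := moment1_ge0 mu.
have mM : moment1 mu <= M by rewrite le_max (moment1_le_PRV muRr) orbT.
have -> : acoef x mu - acoef x' mu = (x - x') * ((x + x') * moment1 mu ^+ 3).
  by rewrite /acoef; ring.
have -> : bcoef x mu - bcoef x' mu =
    (x - x') * (- 2 * moment1 mu * (x ^+ 2 + x * x' + x' ^+ 2)).
  by rewrite /bcoef; ring.
rewrite !normrM -mulrDr mulrC ler_wpM2r //.
have q0 : 0 <= x ^+ 2 + x * x' + x' ^+ 2.
  have := sqr_ge0 (x + x' / 2); have := sqr_ge0 x'; lra.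
have q3K : x ^+ 2 + x * x' + x' ^+ 2 <= 3 * K ^+ 2.
  have xx'K : `|x| * `|x'| <= K * K by rewrite ler_pM.
  have x2K : x ^+ 2 <= K ^+ 2 by rewrite -real_normK ?num_real // lerXn2r ?nnegrE.
  have x'2K : x' ^+ 2 <= K ^+ 2 by rewrite -real_normK ?num_real // lerXn2r ?nnegrE.
  have := ler_norm (x * x'); rewrite normrM; lra.
have xx'2K : `|x + x'| <= 2 * K.
  by apply: le_trans (ler_normD _ _) _; rewrite -[2]/(1 + 1) mulrDl mul1r; exact: lerD.
have m3M : moment1 mu * (moment1 mu * moment1 mu) <= M ^+ 3.
  by rewrite -expr2 -exprS lerXn2r ?nnegrE.
rewrite (ger0_norm m0) (ger0_norm q0) normrN normr_nat.
have := ler_pM (normr_ge0 _) (mulr_ge0 m0 (mulr_ge0 m0 m0)) xx'2K m3M.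
have := ler_pM (mulr_ge0 (ler0n _ 2) m0) q0 (ler_wpM2l (ler0n _ 2) mM) q3K.
lra.
Qed.

Lemma moment1_cvg_Vweak {Rr} {mun : nat -> probability R R} {mu} :
  (forall n, inPRV (@Vfun R) Rr (mun n)) -> inPRV (@Vfun R) Rr mu ->
  Vweak_cvg (@Vfun R) mun mu -> moment1 (mun n) @[n --> \oo] --> moment1 mu.
Proof.
move=> munRr muRr /(_ _ (@norm_continuous _ R) norm_div_Vfun_cvgy norm_div_Vfun_cvgNy).
rewrite (moment1E muRr) (eq_fun (fun n => moment1E (munRr n))).
exact: fine_cvg.
Qed.

Lemma coef_cvg_Vweak Rr (mun : nat -> probability R R) mu :
  (forall n, inPRV (@Vfun R) Rr (mun n)) -> inPRV (@Vfun R) Rr mu ->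
  Vweak_cvg (@Vfun R) mun mu -> forall x,
  `|acoef x (mun n) - acoef x mu| + `|bcoef x (mun n) - bcoef x mu|
    @[n --> \oo] --> (0 : R).
Proof.
move=> munRr muRr /(moment1_cvg_Vweak munRr muRr) m_cvg x.
have dist_cvg0 (u : nat -> R) l :
    u n @[n --> \oo] --> l -> `|u n - l| @[n --> \oo] --> (0 : R).
  by move=> u_cvg; rewrite -(normr0 R); apply: cvg_norm; apply/subr_cvg0.
rewrite -(addr0 0); apply: cvgD; apply: dist_cvg0; apply: cvgMr.
  exact: (continuous_cvg _ (@exprn_continuous R 3 _) m_cvg).
exact: m_cvg.
Qed.

Let dirac0 : probability R R := \d_(0 : R).

Lemma integral_norm_dirac0 : (\int[dirac0]_y (`|y|)%:E = 0)%E.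
Proof.
rewrite integral_dirac //; last by apply/measurable_EFinP; exact: normr_measurable.
by rewrite diracT normr0 mule0.
Qed.

Lemma Lop_dirac0 (U : R -> R) x : Lop dirac0 U x = 0.
Proof.
have m0 : moment1 dirac0 = 0 by rewrite /moment1 integral_norm_dirac0.
by rewrite /Lop /acoef /bcoef m0 expr0n /= !mulr0 !mul0r addr0.
Qed.

Lemma no_pointwise_Lyapunov : ~ (exists U : R -> R,
  C2 U /\ (forall x, 0 <= U x) /\ tends_to_infty U /\
  exists C Lam : R, 0 < C /\ 0 < Lam /\
    forall x mu, inPV U mu -> (\int[mu]_y (`|y|)%:E < +oo)%E ->
    Lop mu U x <= C - Lam * U x).
Proof.
case=> U [[dU _] [_ [[Uy _] [C [Lam [_ [Lam0 LU]]]]]]].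
have mU : measurable_fun setT U.
  apply: continuous_measurable_fun => x.
  by apply: differentiable_continuous; apply/derivable1_diffP.
have dirac0_PV : inPV U dirac0.
  by rewrite /inPV integral_dirac ?diracT ?mul1e ?ltry //; exact/measurable_EFinP.
have U_bounded x : U x <= C / Lam.
  have := LU x _ dirac0_PV; rewrite integral_norm_dirac0 ltry Lop_dirac0 => /(_ isT).
  by rewrite subr_ge0 ler_pdivlMr // mulrC.
move/cvgryPge: Uy => /(_ (C / Lam + 1)) /filter_ex [x Ux].
by have := U_bounded x; lra.
Qed.

Lemma compact_supp_integrable {mu} {f : R -> R} : compact_supp mu -> continuous f ->
  mu.-integrable setT (EFin \o f).
Proof.
case=> K [cK muK] cf; have mf := continuous_measurable_fun cf.
have fK_bounded : \forall M \near +oo, forall z, (f @` K) z -> `|z| <= M.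
  by have := compact_bounded (continuous_compact (continuous_subspaceT cf) cK).
have [M [fKM M0]] := filter_ex (filterI fK_bounded (nbhs_pinfty_gt (num_real (0 : R)))).
apply/integrableP; split; first exact/measurable_EFinP.
apply: (@le_lt_trans _ _ (\int[mu]_y (cst M%:E) y)%E).
  apply: ae_ge0_le_integral => //.
  - by apply: measurableT_comp => //; exact/measurable_EFinP.
  - by move=> y _; rewrite lee_fin ltW.
  exists (~` K); split => //.
    by apply: measurableC; apply: closed_measurable; exact: compact_closed.
  by move=> y /= fy Ky; apply: fy => _; rewrite lee_fin fKM //; exists y.
by rewrite integral_cst // [X in (_ * X)%E]probability_setT mule1 ltry.
Qed.

Lemma integrableD_fun {d} {T : measurableType d} {mu : {measure set T -> \bar R}}
    {f g : T -> R} :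
  mu.-integrable setT (EFin \o f) -> mu.-integrable setT (EFin \o g) ->
  mu.-integrable setT (EFin \o (fun t => f t + g t)).
Proof.
by move=> If Ig; apply: eq_integrable (integrableD measurableT If Ig) => // y _; rewrite /= EFinD.
Qed.

Lemma integrableZl_fun {d} {T : measurableType d} {mu : {measure set T -> \bar R}}
    (c : R) {f : T -> R} :
  mu.-integrable setT (EFin \o f) -> mu.-integrable setT (EFin \o (fun t => c * f t)).
Proof.
by move=> If; apply: eq_integrable (integrableZl measurableT c If) => // y _; rewrite /= EFinM.
Qed.

Lemma sqr_le_quartic {c t : R} : 0 < c -> 0 <= t -> t ^+ 2 <= c * t + t ^+ 4 / c ^+ 2.
Proof.
move=> c0 t0; pose s := t / c.
have s0 : 0 <= s by rewrite /s divr_ge0 // ltW.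
have s_le : s ^+ 2 <= s + s ^+ 4.
  have [s1|s1] := leP s 1.
    have : s ^+ 2 <= s by rewrite expr2 ler_piMr.
    have := exprn_ge0 4 s0; lra.
  have s2_ge1 : 1 <= s ^+ 2 by rewrite expr_ge1 // ltW.
  have := ler_wpM2l (exprn_ge0 2 s0) s2_ge1; lra.
have -> : t = c * s by rewrite /s mulrC divfK ?gt_eqF.
have -> : c * (c * s) + (c * s) ^+ 4 / c ^+ 2 = c ^+ 2 * (s + s ^+ 4).
  by field; rewrite gt_eqF.
by rewrite exprMn; apply: ler_wpM2l; rewrite // exprn_ge0 // ltW.
Qed.

Lemma moment_drift_le {m1 m2 m4 : R} : 0 <= m1 -> m1 ^+ 2 <= m2 -> m2 ^+ 2 <= m4 ->
  (forall c, 0 < c -> m2 <= c * m1 + m4 / c ^+ 2) ->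
  m1 ^+ 3 * m2 - 2 * (m1 * m4) + m2 <= 3.
Proof.
move=> m1_0 m12 m24 m2_le.
have m2_0 : 0 <= m2 by rewrite (le_trans _ m12) ?sqr_ge0.
have m4_0 : 0 <= m4 by rewrite (le_trans _ m24) ?sqr_ge0.
have drift : m1 ^+ 3 * m2 <= m1 * m4.
  rewrite exprS -mulrA ler_wpM2l // (le_trans _ m24) // expr2 ler_wpM2r //.
suff : m2 <= 3 + m1 * m4 by lra.
have [m1_ge1|m1_lt1] := leP 1 m1.
  have : 0 <= (m2 - 2^-1) ^+ 2 by rewrite sqr_ge0.
  have : m4 <= m1 * m4 by rewrite ler_peMl.
  lra.
have [m1_eq0|m1_neq0] := eqVneq m1 0.
  have m4_1 : 0 < m4 + 1 by lra.
  have := m2_le _ m4_1; rewrite m1_eq0 mulr0 add0r mul0r addr0 => /le_trans; apply.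
  rewrite ler_pdivrMr ?exprn_gt0 //.
  have := sqr_ge0 m4; lra.
have m1_gt0 : 0 < m1 by rewrite lt_neqAle eq_sym m1_neq0.
have := m2_le m1^-1; rewrite invr_gt0 => /(_ m1_gt0); rewrite mulVf // exprVn invrK => h.
have : m1 ^+ 2 * m4 <= m1 * m4 by rewrite expr2 -mulrA ler_piMl ?mulr_ge0 // ltW.
lra.
Qed.

Section compact_support.
Variable mu : probability R R.
Hypothesis mu_cs : compact_supp mu.

Let absmoment n := \int[mu]_y (`|y| ^+ n).

Let integrable_normX n : mu.-integrable setT (EFin \o (fun y => `|y| ^+ n)).
Proof.
apply: (compact_supp_integrable mu_cs) => y.
exact: continuous_comp (@norm_continuous _ R y) (@exprn_continuous R n _).
Qed.

Let integrableZ_normX p n : mu.-integrable setT (EFin \o (fun y => p * `|y| ^+ n)).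
Proof. by have := integrableZl_fun p (integrable_normX n). Qed.

Let integrable_quartic (p0 p1 p2 p4 : R) : mu.-integrable setT
  (EFin \o (fun y => p1 * `|y| + p2 * `|y| ^+ 2 + p4 * `|y| ^+ 4 + p0)).
Proof.
apply: integrableD_fun (finite_measure_integrable_cst _ _ measurableT).
apply: integrableD_fun (integrableZ_normX p4 4).
exact: integrableD_fun (integrableZ_normX p1 1) (integrableZ_normX p2 2).
Qed.

Lemma Rintegral_quartic (p0 p1 p2 p4 : R) :
  \int[mu]_y (p1 * `|y| + p2 * `|y| ^+ 2 + p4 * `|y| ^+ 4 + p0) =
  p1 * absmoment 1 + p2 * absmoment 2 + p4 * absmoment 4 + p0.
Proof.
rewrite !RintegralD ?RintegralZl ?Rintegral_cst // ?[X in fine X]probability_setT ?mulr1 //.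
- exact: integrable_normX 1.
all: repeat apply: integrableD_fun.
all: first [exact: integrableZ_normX p1 1 | exact: integrableZ_normX |
            exact: finite_measure_integrable_cst].
Qed.

Lemma integral_quartic (f : R -> R) (p0 p1 p2 p4 : R) :
  (forall y, f y = p1 * `|y| + p2 * `|y| ^+ 2 + p4 * `|y| ^+ 4 + p0) ->
  (\int[mu]_y (f y)%:E = (p1 * absmoment 1 + p2 * absmoment 2 + p4 * absmoment 4 + p0)%:E)%E.
Proof.
move=> fE; under eq_integral => y _ do rewrite fE.
rewrite -Rintegral_quartic /Rintegral fineK //.
exact: integrable_fin_num (integrable_quartic p0 p1 p2 p4).
Qed.

Lemma absmoment_quartic_ge0 (p0 p1 p2 p4 : R) :
  (forall t, 0 <= t -> 0 <= p1 * t + p2 * t ^+ 2 + p4 * t ^+ 4 + p0) ->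
  0 <= p1 * absmoment 1 + p2 * absmoment 2 + p4 * absmoment 4 + p0.
Proof. by move=> p_ge0; rewrite -Rintegral_quartic; apply: Rintegral_ge0 => y _; exact: p_ge0. Qed.

Lemma absmoment1_sqr_le : absmoment 1 ^+ 2 <= absmoment 2.
Proof.
suff : 0 <= - 2 * absmoment 1 * absmoment 1 + 1 * absmoment 2 + 0 * absmoment 4 +
            absmoment 1 ^+ 2 by lra.
by apply: absmoment_quartic_ge0 => t _; have := sqr_ge0 (t - absmoment 1); lra.
Qed.

Lemma absmoment2_sqr_le : absmoment 2 ^+ 2 <= absmoment 4.
Proof.
suff : 0 <= 0 * absmoment 1 + - 2 * absmoment 2 * absmoment 2 + 1 * absmoment 4 +
            absmoment 2 ^+ 2 by lra.
by apply: absmoment_quartic_ge0 => t _; have := sqr_ge0 (t ^+ 2 - absmoment 2); lra.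
Qed.

Lemma absmoment2_le c : 0 < c -> absmoment 2 <= c * absmoment 1 + absmoment 4 / c ^+ 2.
Proof.
move=> c0; suff : 0 <= c * absmoment 1 + - 1 * absmoment 2 + (c ^+ 2)^-1 * absmoment 4 + 0.
  by lra.
by apply: absmoment_quartic_ge0 => t t0; have := sqr_le_quartic c0 t0; lra.
Qed.

Lemma Lyapunov_Vfun_compact_supp :
  (\int[mu]_x (Lop mu (@Vfun R) x)%:E <= 3%:E - 2%:E * \int[mu]_x (Vfun x)%:E)%E.
Proof.
have m1E : moment1 mu = absmoment 1 by [].
rewrite (@integral_quartic _ 0 0 (moment1 mu ^+ 3) (- 2 * moment1 mu)); last first.
  move=> y; rewrite /Lop derive2_Vfun derive1_Vfun /acoef /bcoef /=.
  by rewrite (_ : 4 = 2 * 2)%N // exprM real_normK ?num_real //; ring.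
rewrite (@integral_quartic _ 0 0 2^-1 0); last by move=> y; rewrite Vfun_normE; ring.
rewrite -EFinM -EFinB lee_fin m1E.
have m1_ge0 : 0 <= absmoment 1 by apply: Rintegral_ge0.
have := moment_drift_le m1_ge0 absmoment1_sqr_le absmoment2_sqr_le absmoment2_le.
lra.
Qed.

End compact_support.

End nonlinear_FPK_example.

Theorem mainTheorem10 (R : realType) :
  (* (a) all hypotheses of Corollary 2.3, with m = 0, V(x) = x^2/2, H = 0 *)
  ( (* V in C^2, V >= 0, V -> +oo at infinity *)
    (C2 (@Vfun R) /\ (forall x : R, 0 <= Vfun x) /\ tends_to_infty (@Vfun R)) /\
    (* H = 0 is continuous, >= 0, H/V -> 0 at infinity *)
    (continuous (fun _ : R => 0 : R) /\
     (fun x : R => 0 / Vfun x) @ +oo --> (0 : R) /\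
     (fun x : R => 0 / Vfun x) @ -oo --> (0 : R)) /\
    (* (H1.2) *)
    (forall Rr : R, 0 < Rr -> forall k1 k2 : R,
       exists B : R, forall x : R, x \in `[k1, k2] ->
         forall mu : probability R R, inPRV (@Vfun R) Rr mu ->
           `|acoef x mu| + `|bcoef x mu| <= B) /\
    (* (H1.3) *)
    (forall Rr : R, 0 < Rr -> forall k1 k2 : R,
       exists w : R -> R,
         (forall t, 0 <= t -> 0 <= w t) /\
         {within [set t : R | 0 <= t], continuous w} /\
         (forall s t, 0 <= s -> s <= t -> w s <= w t) /\
         w 0 = 0 /\
         forall x x' : R, x \in `[k1, k2] -> x' \in `[k1, k2] ->
           forall mu : probability R R, inPRV (@Vfun R) Rr mu ->
             `|acoef x mu - acoef x' mu| + `|bcoef x mu - bcoef x' mu|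
               <= w `|x - x'|) /\
    (* (H2) *)
    (forall Rr : R, 0 < Rr ->
       forall (mun : nat -> probability R R) (mu : probability R R),
         (forall n, inPRV (@Vfun R) Rr (mun n)) -> inPRV (@Vfun R) Rr mu ->
         Vweak_cvg (@Vfun R) mun mu ->
         forall x : R,
           (`|acoef x (mun n) - acoef x mu| + `|bcoef x (mun n) - bcoef x mu|)
             @[n --> \oo] --> (0 : R)) /\
    (* growth bound at 0 with H = 0 *)
    (forall C1 C2 : R, 0 < C1 -> 0 < C2 ->
       forall mu : probability R R, inPV (@Vfun R) mu ->
         ((`|acoef 0 mu| + `|bcoef 0 mu|)%:E
            <= C1%:E + C2%:E * \int[mu]_x ((0 : R)%:E))%E) /\
    (* Lyapunov condition for compactly supported measures *)
    (exists C Lam : R, 0 < C /\ 0 < Lam /\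
       forall mu : probability R R, compact_supp mu ->
         (\int[mu]_x (Lop mu (@Vfun R) x)%:E
            <= C%:E - Lam%:E * \int[mu]_x (Vfun x)%:E)%E) ) /\
  (* (b) no pointwise Lyapunov function *)
  ~ (exists U : R -> R,
       C2 U /\ (forall x, 0 <= U x) /\ tends_to_infty U /\
       exists C Lam : R, 0 < C /\ 0 < Lam /\
         forall (x : R) (mu : probability R R),
           inPV U mu -> (\int[mu]_y (`|y|)%:E < +oo)%E ->
           Lop mu U x <= C - Lam * U x).
Proof.
split; last exact: no_pointwise_Lyapunov.
split; first by split; [exact: Vfun_C2 | split; [exact: Vfun_ge0 | exact: Vfun_tends_to_infty]].
split.
  have -> : (fun x : R => 0 / Vfun x) = cst 0 by apply/funext => x; rewrite mul0r.
  by split; [exact: cst_continuous | split; exact: cvg_cst].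
split; first by move=> Rr _ k1 k2; exact: coef_bounded.
split.
  move=> Rr _ k1 k2; have [L L0 coef_L] := @coef_Lipschitz R Rr k1 k2.
  exists (fun t => L * t); split; first by move=> t t0; rewrite mulr_ge0.
  split; first exact/continuous_subspaceT/mulrl_continuous.
  split; first by move=> s t _ st; rewrite ler_wpM2l.
  by split; [rewrite mulr0 | exact: coef_L].
split; first by move=> Rr _ mun mu; exact: coef_cvg_Vweak.
split.
  move=> C1 C2 C1_gt0 _ mu _; rewrite integral0 mule0 adde0 lee_fin.
  by rewrite /acoef /bcoef !expr0n /= mulr0 !mul0r normr0 addr0 ltW.
by exists 3, 2; do 2!split => //; exact: Lyapunov_Vfun_compact_supp.
Qed.
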